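(* Let $\mathcal G$ be a good pseudogroup on a compact metric space $X$, $\mathcal G_1$ a good generating set and $\mathcal G_2$ the compacted generating set. Then there exists $\rho>0$ such that for all $x_0,y_0\in X$: if $y_0\in\Phi^1_{\rho/2}(x_0)$, then $\Phi^1_{\rho/2}(x_0)\subset\Phi^2_\rho(y_0)$.
   Context: $\mathrm{Homeo}(X)$: homeomorphisms $g:D_g\to R_g$ between open subsets of $X$, composed on natural domains $D_{h\circ g}=g^{-1}(D_h)$. A pseudogroup is a subset of $\mathrm{Homeo}(X)$ containing $\mathrm{id}_X$, closed under composition, inversion, restriction to open subsets, and gluing along open covers of the domain. $\Gamma$ generates $\mathcal G$ if $\bigcup_{g\in\Gamma}(D_g\cup R_g)=X$ and $\mathcal G$ is exactly the set of $g\in\mathrm{Homeo}(X)$ locally equal near each point of $D_g$ to a finite composition of elements of $\Gamma$ and their inverses. A finite generating set is symmetric if it contains $\mathrm{id}_X$ and is closed under inverses; a finite symmetric generating set $\mathcal G_1$ is good if for each $g\in\mathcal G_1$ there is a compact $K_g\subset D_g$ with $\mathcal G_2=\{g|_{\mathrm{int}(K_g)}:g\in\mathcal G_1\}$ still generating $\mathcal G$ ($\mathcal G_2$ is the compacted generating set; $\mathcal G$ is good if it has a good generating set). For $i=1,2$: $\mathcal G^i_n=\{h_1\circ\cdots\circ h_n:h_j\in\mathcal G_i\}$, $\mathcal G^{i,x}_n=\{g\in\mathcal G^i_n:x\in D_g\}$, $\Phi^i_\delta(x)=\{y\in X: d(g(x),g(y))\le\delta\ \forall n\in\mathbb N,\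 \forall g\in\mathcal G^{i,x}_n\cap\mathcal G^{i,y}_n\}$. *)

From Stdlib Require Import Reals List.
Open Scope R_scope.
Set Implicit Arguments.

Section Defs.
Variable X : Type.
Variable d : X -> X -> R.

Definition is_metric : Prop :=
  (forall x y, 0 <= d x y) /\ (forall x y, d x y = 0 <-> x = y) /\
  (forall x y, d x y = d y x) /\ (forall x y z, d x z <= d x y + d y z).

Definition open (U : X -> Prop) : Prop :=
  forall x, U x -> exists e, 0 < e /\ forall y, d x y < e -> U y.

Definition interior (K : X -> Prop) : X -> Prop :=
  fun x => exists e, 0 < e /\ forall y, d x y < e -> K y.

Definition compact (K : X -> Prop) : Prop :=
  forall (I : Type) (U : I -> X -> Prop), (forall i, open (U i)) ->
    (forall x, K x -> exists i, U i x) ->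
    exists l : list I, forall x, K x -> exists i, In i l /\ U i x.

Definition compact_space : Prop := compact (fun _ => True).

Definition continuous_on (D : X -> Prop) (f : X -> X) : Prop :=
  forall x, D x -> forall e, 0 < e -> exists r, 0 < r /\
    forall y, D y -> d x y < r -> d (f x) (f y) < e.

(** A partial map: a domain D_g together with a (total) function whose values
    matter only on D_g.  Two representations denote the same partial map iff
    they are [heq]. *)
Definition PMap : Type := ((X -> Prop) * (X -> X))%type.

Definition pdom (g : PMap) : X -> Prop := fst g.
Definition pfn (g : PMap) : X -> X := snd g.
Definition prange (g : PMap) : X -> Prop :=
  fun y => exists x, pdom g x /\ pfn g x = y.

Definition heq (g h : PMap) : Prop :=
  (forall x, pdom g x <-> pdom h x) /\ (forall x, pdom g x -> pfn g x = pfn h x).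

Definition is_homeo (g : PMap) : Prop :=
  open (pdom g) /\ open (prange g) /\
  (forall x y, pdom g x -> pdom g y -> pfn g x = pfn g y -> x = y) /\
  continuous_on (pdom g) (pfn g) /\
  exists h, (forall x, pdom g x -> h (pfn g x) = x) /\ continuous_on (prange g) h.

Definition id_X : PMap := (fun _ => True, fun x => x).

Definition pcomp (h g : PMap) : PMap :=
  (fun x => pdom g x /\ pdom h (pfn g x), fun x => pfn h (pfn g x)).

Definition inverse_of (h g : PMap) : Prop :=
  (forall y, pdom h y <-> prange g y) /\
  (forall x, pdom g x -> pfn h (pfn g x) = x).

Definition restrict (g : PMap) (U : X -> Prop) : PMap :=
  (fun x => pdom g x /\ U x, pfn g).

Definition pseudogroup (P : PMap -> Prop) : Prop :=
  (* P is a set of partial maps (respects equality of partial maps) *)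
  (forall g h, P g -> heq g h -> P h) /\
  (forall g, P g -> is_homeo g) /\
  P id_X /\
  (forall g h, P g -> P h -> P (pcomp h g)) /\
  (forall g h, P g -> inverse_of h g -> P h) /\
  (forall g U, P g -> open U -> P (restrict g U)) /\
  (forall g (I : Type) (U : I -> X -> Prop), is_homeo g ->
     (forall i, open (U i)) -> (forall x, pdom g x -> exists i, U i x) ->
     (forall i, P (restrict g (U i))) -> P g).

Fixpoint wfn (w : list PMap) : X -> X :=
  match w with
  | nil => fun x => x
  | h :: w' => fun x => pfn h (wfn w' x)
  end.

Fixpoint wdom (w : list PMap) : X -> Prop :=
  match w with
  | nil => fun _ => True
  | h :: w' => fun x => wdom w' x /\ pdom h (wfn w' x)
  end.

Definition letter (Gamma : list PMap) (l : PMap) : Prop :=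
  In l Gamma \/ exists g, In g Gamma /\ inverse_of l g.

Definition generates (P : PMap -> Prop) (Gamma : list PMap) : Prop :=
  (forall g, In g Gamma -> is_homeo g) /\
  (forall x, exists g, In g Gamma /\ (pdom g x \/ prange g x)) /\
  (forall g, is_homeo g ->
     (P g <-> forall x, pdom g x -> exists U, open U /\ U x /\
        exists w : list PMap, (forall l, In l w -> letter Gamma l) /\
          forall z, U z -> pdom g z -> wdom w z /\ wfn w z = pfn g z)).

Definition symmetric_set (Gamma : list PMap) : Prop :=
  (exists g, In g Gamma /\ heq g id_X) /\
  (forall g, In g Gamma -> exists h, In h Gamma /\ inverse_of h g).

Definition compacted (G1 : list PMap) (K : PMap -> X -> Prop) : list PMap :=
  map (fun g => (interior (K g), pfn g)) G1.

Definition good_generating_set (P : PMap -> Prop) (G1 : list PMap)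
  (K : PMap -> X -> Prop) : Prop :=
  generates P G1 /\ symmetric_set G1 /\
  (forall g h, In g G1 -> In h G1 -> heq g h -> K g = K h) /\
  (forall g, In g G1 -> compact (K g) /\ forall x, K g x -> pdom g x) /\
  generates P (compacted G1 K).

Definition Phi (Gs : list PMap) (delta : R) (x : X) : X -> Prop :=
  fun y => forall w : list PMap, (forall h, In h w -> In h Gs) ->
    wdom w x -> wdom w y -> d (wfn w x) (wfn w y) <= delta.

End Defs.

(** Choose [rho] to be a common Lebesgue number of the inclusions [K_g ⊆ D_g],
    [g ∈ G_1], which exists because each [K_g] is compact and each [D_g] open.
    If [y] and [z] both lie in [Phi^1_{rho/2}(x)] and a word in [G_2] is
    defined at [y], then by induction along the word the corresponding
    [G_1]-word is defined at [x] as well: the current image of [y] lies in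
    some [K_g] and the image of [x] is within [rho/2 < rho] of it, hence in
    [D_g].  The same holds for [z], and the triangle inequality through the
    image of [x] bounds the distance of the images of [y] and [z] by [rho]. *)
From Pilot Require Import Defs.
From Stdlib Require Import Reals List Lra.
Open Scope R_scope.
Set Implicit Arguments.

Lemma ex_common_radius (A : Type) (l : list A) (P : A -> R -> Prop) :
  (forall a e e', P a e -> 0 < e' <= e -> P a e') ->
  (forall a, In a l -> exists e, 0 < e /\ P a e) ->
  exists e, 0 < e /\ forall a, In a l -> P a e.
Proof.
  intros P_down. induction l as [|a l IH]; intros Hl.
  - exists 1. split; [lra | intros a []].
  - destruct IH as [e1 [He1 Hl1]]; [intros; apply Hl; now right|].
    destruct (Hl a (or_introl eq_refl)) as [e2 [He2 Ha]].
    assert (Hmin : 0 < Rmin e1 e2) by (apply Rmin_glb_lt; lra).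
    exists (Rmin e1 e2). split; [exact Hmin|].
    intros b [<- | Hb].
    + apply (P_down _ e2); [exact Ha | split; [exact Hmin | apply Rmin_r]].
    + apply (P_down _ e1); [auto | split; [exact Hmin | apply Rmin_l]].
Qed.

Lemma incl_map_lift (A B : Type) (f : A -> B) (l : list A) (w : list B) :
  incl w (map f l) -> exists w', incl w' l /\ w = map f w'.
Proof.
  induction w as [|b w IH]; intros Hw.
  - exists nil. split; [intros a [] | reflexivity].
  - destruct IH as [w' [Hw' ->]]; [intros c Hc; apply Hw; now right|].
    destruct (proj1 (in_map_iff f l b) (Hw b (or_introl eq_refl)))
      as [a [<- Ha]].
    exists (a :: w'). split; [|reflexivity].
    intros c [<- | Hc]; auto.
Qed.

Section Metric.
Variable X : Type.
Variable d : X -> X -> R.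
Hypothesis Hd : is_metric d.

Lemma dist_refl (x : X) : d x x = 0.
Proof. destruct Hd as [_ [Hzero _]]. now apply Hzero. Qed.

Lemma open_ball (a : X) (r : R) : Defs.open d (fun y => d a y < r).
Proof.
  destruct Hd as [_ [_ [_ Htri]]].
  intros x Hx. exists (r - d a x). split; [lra|].
  intros y Hy. pose proof (Htri a x y). lra.
Qed.

Lemma interior_subset (K : X -> Prop) (x : X) : Defs.interior d K x -> K x.
Proof.
  intros [e [He HK]]. apply HK. rewrite dist_refl. exact He.
Qed.

Definition lebesgue_radius (K D : X -> Prop) (e : R) : Prop :=
  forall a b, K a -> d a b < e -> D b.

Lemma lebesgue_radius_le (K D : X -> Prop) (e e' : R) :
  lebesgue_radius K D e -> e' <= e -> lebesgue_radius K D e'.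
Proof. intros HKD Hle a b Ka Hab. apply (HKD a b Ka). lra. Qed.

Lemma compact_lebesgue_radius (K D : X -> Prop) :
  Defs.compact d K -> Defs.open d D -> (forall x, K x -> D x) ->
  exists e, 0 < e /\ lebesgue_radius K D e.
Proof.
  intros HK HD HKD.
  destruct Hd as [_ [_ [_ Htri]]].
  set (I := {c : X & {r : R | 0 < r /\ forall y, d c y < r -> D y}}).
  set (center := fun i : I => projT1 i).
  set (radius := fun i : I => proj1_sig (projT2 i)).
  destruct (HK I (fun i y => d (center i) y < radius i / 2)) as [l Hl].
  - intro i. apply open_ball.
  - intros x Kx. destruct (HD x (HKD x Kx)) as [r [Hr Hball]].
    exists (existT _ x (exist _ r (conj Hr Hball))).
    unfold center, radius; simpl. rewrite dist_refl. lra.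
  - destruct (ex_common_radius l (fun i e => e <= radius i / 2)) as [e [He Hle]].
    + intros i e e' Hi He'. lra.
    + intros [c [r [Hr Hball]]] _. exists (r / 2). unfold radius; simpl.
      split; lra.
    + exists e. split; [exact He|].
      intros a b Ka Hab. destruct (Hl a Ka) as [i [Hi Hai]].
      pose proof (Hle i Hi) as Hei. pose proof (Htri (center i) a b).
      destruct i as [c [r [Hr Hball]]]; unfold center, radius in *; simpl in *.
      apply Hball. lra.
Qed.

Lemma wfn_map_pfn (D : PMap X -> X -> Prop) (w : list (PMap X)) (t : X) :
  wfn (map (fun g => (D g, pfn g)) w) t = wfn w t.
Proof. induction w as [|g w IH]; simpl; [reflexivity | now rewrite IH]. Qed.

Section Compacted.
Variable G1 : list (PMap X).
Variable K : PMap X -> X -> Prop.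
Variable rho : R.
Hypothesis rho_gt0 : 0 < rho.
Hypothesis K_sub_dom : forall g, In g G1 -> forall x, K g x -> pdom g x.
Hypothesis rho_lebesgue : forall g, In g G1 -> lebesgue_radius (K g) (pdom g) rho.

Lemma wdom_compacted_Phi (x y : X) (w : list (PMap X)) :
  Phi d G1 (rho / 2) x y -> incl w G1 ->
  wdom (map (fun g => (Defs.interior d (K g), pfn g)) w) y ->
  wdom w x /\ wdom w y.
Proof.
  intros Hxy. induction w as [|g w IH]; intros Hw Hdom; [simpl; auto|].
  destruct Hdom as [Hdom Hg]. rewrite wfn_map_pfn in Hg.
  apply interior_subset in Hg.
  destruct (incl_cons_inv Hw) as [Hg1 Hw'].
  destruct (IH Hw' Hdom) as [Hx Hy].
  pose proof (Hxy w Hw' Hx Hy) as Hclose.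
  destruct Hd as [_ [_ [Hsym _]]].
  repeat split; [exact Hx | | exact Hy | exact (K_sub_dom Hg1 Hg)].
  apply (rho_lebesgue Hg1 Hg). rewrite Hsym. lra.
Qed.

Lemma Phi_compacted (x y z : X) :
  Phi d G1 (rho / 2) x y -> Phi d G1 (rho / 2) x z ->
  Phi d (compacted d G1 K) rho y z.
Proof.
  intros Hxy Hxz w Hw Hy Hz.
  destruct (incl_map_lift _ _ Hw) as [w' [Hw' ->]].
  destruct (wdom_compacted_Phi Hxy Hw' Hy) as [Hx Hy'].
  destruct (wdom_compacted_Phi Hxz Hw' Hz) as [_ Hz'].
  rewrite !wfn_map_pfn.
  pose proof (Hxy w' Hw' Hx Hy'). pose proof (Hxz w' Hw' Hx Hz').
  destruct Hd as [_ [_ [Hsym Htri]]].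
  pose proof (Htri (wfn w' y) (wfn w' x) (wfn w' z)) as Hyz.
  rewrite (Hsym (wfn w' y) (wfn w' x)) in Hyz. lra.
Qed.

End Compacted.
End Metric.

Theorem mainTheorem8 (X : Type) (d : X -> X -> R)
  (Hd : is_metric d) (Hc : compact_space d)
  (G : PMap X -> Prop) (HG : pseudogroup d G)
  (G1 : list (PMap X)) (K : PMap X -> X -> Prop)
  (HG1 : good_generating_set d G G1 K) :
  exists rho, 0 < rho /\
    forall x0 y0 : X, Phi d G1 (rho / 2) x0 y0 ->
      forall z, Phi d G1 (rho / 2) x0 z -> Phi d (compacted d G1 K) rho y0 z.
Proof.
  destruct HG1 as [[Hhomeo _] [_ [_ [HK _]]]].
  destruct (ex_common_radius G1 (fun g e => lebesgue_radius d (K g) (pdom g) e))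
    as [rho [Hrho Hleb]].
  - intros g e e' Hg [_ Hle]. exact (lebesgue_radius_le Hg Hle).
  - intros g Hg. destruct (HK g Hg) as [Kcompact Ksub].
    apply (compact_lebesgue_radius Hd Kcompact); [apply (Hhomeo g Hg) | exact Ksub].
  - exists rho. split; [exact Hrho|].
    intros x0 y0 Hy z Hz.
    apply (Phi_compacted Hd K Hrho (fun g Hg => proj2 (HK g Hg)) Hleb Hy Hz).
Qed.
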